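(* The forcing notion $Q_*$ is forcing equivalent to Sacks forcing.
   Context: Terms. Fix a set $X$ of variable symbols, each taking values in $\{0,1\}$. An $X$-term $t$ is given by a finite sequence of variables $(v_0,\dots,v_{l-1})$ ($l\ge0$) and a function $f:2^l\to2$; a variable $v$ is identified with the term $((v),\mathrm{id})$. An assignment is a function $a:X\to2$; it extends to terms by $t\circ a=f(v_0\circ a,\dots,v_{l-1}\circ a)$. A substitution $\phi$ maps each variable to an $X$-term; $t\circ\phi$ is obtained by replacing each variable $v$ in $t$ by $\phi(v)$, and for a family $\bar t=(t_i)$, $\bar t\circ\phi=(t_i\circ\phi)$. Terms are identified modulo $t=^*s$ iff $t\circ a=s\circ a$ for all assignments $a$. A term depends only on variables in $Y$ if it is $=^*$ to a term using only variables from $Y$. A term or variable $s$ is determined by terms $t_0,\dots,t_n$ if for all assignments $a,b$, $(t_i\circ a)_{i\le n}=(t_i\circ b)_{i\le n}$ implies $s\circ a=s\circ b$. Let $\tau(n,m)=n+\tfrac12(n+m)(n+m+1)$ and $(i,j)\unlhd(n,m)$ iff $\tau(i,j)\le\tau(n,m)$. With $X=\{x_{i,j}:i,j\in\omega\}$, $Q_*$ is the set of squares $\bar t=(t_{n,m})_{n,m\in\omega}$ of terms such that (1) $t_{n,m}$ depends only on variables $x_{i,j}$ with $(i,j)\unlhd(n,m)$, and (2) each $x_{i,j}$ is determined by finitely many $t_{n,m}$. An element $\phi\in Q_*$ is regarded as the substitution $x_{i,j}\mapsto\phi_{i,j}$; $\bar t\le\bar s$ iff there is $\phi\in Q_*$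 with $\bar t=\bar s\circ\phi$. Sacks forcing is the set of perfect subtrees of $2^{<\omega}$ ordered by inclusion. *)

From Stdlib Require Import List.
From mathcomp Require Import all_boot.
Set Implicit Arguments. Unset Strict Implicit. Unset Printing Implicit Defensive.

(* A variable x_{i,j} is represented by the pair (i, j). *)
Definition var := (nat * nat)%type.

(* An X-term: a finite sequence of variables (v_0,...,v_{l-1}) together with a
   function f : 2^l -> 2.  f is given as a function on bit lists; only its
   values on lists of length l = size tvars are ever used. *)
Record term := Term { tvars : seq var; tfn : seq bool -> bool }.

Definition assignment := var -> bool.

Definition eval (t : term) (a : assignment) : bool := tfn t (map a (tvars t)).

(* a variable v is identified with the term ((v), id) *)
Definition var_term (v : var) : term := Term [:: v] (fun bs => head false bs).

Definition substitution := var -> term.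

(* t o phi : replace each variable v_k of t by the term phi(v_k). *)
Definition subst (t : term) (phi : substitution) : term :=
  Term (flatten [seq tvars (phi v) | v <- tvars t])
       (fun bs => tfn t [seq tfn (phi vc.1) vc.2
                        | vc <- zip (tvars t)
                                 (reshape [seq size (tvars (phi v)) | v <- tvars t] bs)]).

Definition teq (t s : term) : Prop := forall a : assignment, eval t a = eval s a.

Definition depends_only_on (t : term) (Y : var -> Prop) : Prop :=
  exists s : term, (forall v, v \in tvars s -> Y v) /\ teq t s.

Definition determined_by (s : term) (ts : seq term) : Prop :=
  forall a b : assignment,
    (forall t, In t ts -> eval t a = eval t b) -> eval s a = eval s b.

Definition tau (n m : nat) : nat := n + ((n + m) * (n + m).+1) %/ 2.

Definition tri_le (ij nm : var) : Prop := tau ij.1 ij.2 <= tau nm.1 nm.2.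

Definition square := nat -> nat -> term.

Definition in_Qstar (t : square) : Prop :=
  (forall n m, depends_only_on (t n m) (fun ij => tri_le ij (n, m))) /\
  (forall i j : nat, exists F : seq var,
      determined_by (var_term (i, j)) [seq t nm.1 nm.2 | nm <- F]).

Definition Qstar := { t : square | in_Qstar t }.

Definition sq_subst (phi : square) : substitution := fun v => phi v.1 v.2.

Definition Qstar_le (t s : Qstar) : Prop :=
  exists phi : Qstar, forall n m : nat,
    teq (proj1_sig t n m) (subst (proj1_sig s n m) (sq_subst (proj1_sig phi))).

Definition tree_set := seq bool -> Prop.

Definition perfect_tree (T : tree_set) : Prop :=
  T [::] /\
  (forall s t : seq bool, prefix s t -> T t -> T s) /\
  (forall s, T s -> exists t, prefix s t /\ T (rcons t false) /\ T (rcons t true)).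

Definition Sacks := { T : tree_set | perfect_tree T }.

Definition Sacks_le (T S : Sacks) : Prop :=
  forall s, proj1_sig T s -> proj1_sig S s.

(* Regular open subsets of a preordered set (P, le): these form the Boolean
   completion RO(P), ordered by inclusion. *)
Definition regular_open (P : Type) (le : P -> P -> Prop) (A : P -> Prop) : Prop :=
  (forall p q, A p -> le q p -> A q) /\
  (forall p, (forall q, le q p -> exists r, le r q /\ A r) -> A p).

Definition set_sub (P : Type) (A B : P -> Prop) : Prop := forall p, A p -> B p.
Definition set_eq (P : Type) (A B : P -> Prop) : Prop := forall p, A p <-> B p.

(* P and Q are forcing equivalent iff their Boolean completions RO(P) and RO(Q)
   are isomorphic (as partial orders under inclusion, i.e. as complete Boolean
   algebras); isomorphism taken up to extensional equality of sets. *)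
Definition forcing_equivalent (P Q : Type) (leP : P -> P -> Prop) (leQ : Q -> Q -> Prop)
  : Prop :=
  exists (f : (P -> Prop) -> (Q -> Prop)) (g : (Q -> Prop) -> (P -> Prop)),
    (forall A, regular_open leP A -> regular_open leQ (f A)) /\
    (forall B, regular_open leQ B -> regular_open leP (g B)) /\
    (forall A, regular_open leP A -> set_eq (g (f A)) A) /\
    (forall B, regular_open leQ B -> set_eq (f (g B)) B) /\
    (forall A1 A2, regular_open leP A1 -> regular_open leP A2 ->
       (set_sub A1 A2 <-> set_sub (f A1) (f A2))).

From mathcomp Require Import all_boot zify.
From Stdlib Require Import Classical ClassicalEpsilon FunctionalExtensionality.
Set Implicit Arguments. Unset Strict Implicit.

(* Enumerate the variables x_{i,j} along the Cantor pairing tau.  A square of Q_*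
   is then a map F of Cantor space into itself whose k-th output bit depends only
   on the first k+1 input bits (condition (1)) and each input bit of which is
   recovered from finitely many output bits (condition (2)): a homeomorphism onto
   a closed set, whose range is the set of branches of a perfect tree.  Composition
   of substitutions is composition of maps, so t |-> (tree of range t) is monotone.
   Its image is dense: every perfect tree is the range of its canonical
   parametrization through its splitting nodes.  And it reflects compatibility:
   if range t1 is included in range t, the parametrization R of the tree of t1,
   with splitting nodes chosen so long that the first bits of R already suffice to
   decode the corresponding inputs of t and t1, factors as t o phi and t1 o phi1
   with phi, phi1 in Q_*.  A dense map with these properties induces an
   isomorphism of the regular open algebras. *)

Definition tri (s : nat) : nat := (s * s.+1) %/ 2.

Lemma triS s : tri s.+1 = tri s + s.+1.
Proof.
rewrite /tri; have -> : s.+1 * s.+2 = s.+1 * 2 + s * s.+1 by lia.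
by rewrite divnMDl // addnC.
Qed.

Definition cantor (v : var) : nat := tau v.1 v.2.

Lemma tri_leE v w : tri_le v w = (cantor v <= cantor w). Proof. by []. Qed.

Lemma cantorE n m : cantor (n, m) = n + tri (n + m). Proof. by []. Qed.

(* The inverse of [cantor]: walk the antidiagonals n + m = const, from (0, m) to (m, 0). *)
Fixpoint uncantor (k : nat) : var :=
  if k is k'.+1 then
    let: (n, m) := uncantor k' in if m is m'.+1 then (n.+1, m') else (0, n.+1)
  else (0, 0).

Lemma uncantorK : cancel uncantor cantor.
Proof.
elim=> [//|k /=]; case: (uncantor k) => n [|m]; rewrite !cantorE.
- by rewrite addn0 add0n triS; lia.
- by rewrite -addSnnS; lia.
Qed.

Lemma cantorK : cancel cantor uncantor.
Proof.
suff uncantor_eq k v : cantor v = k -> uncantor k = v by move=> v; exact: uncantor_eq.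
elim: k v => [|k IH] [[|n] m]; rewrite cantorE.
- by case: m => [|m] //; rewrite add0n triS; lia.
- lia.
- case: m => [|m]; rewrite !add0n ?triS // => eq_k.
  by rewrite [LHS]/= (IH (m, 0)) // cantorE addn0; lia.
- by move=> eq_k; rewrite [LHS]/= (IH (n, m.+1)) // cantorE -addSnnS; lia.
Qed.

Lemma eval_subst t phi a : eval (subst t phi) a = eval t (fun v => eval (phi v) a).
Proof.
rewrite /eval /subst /=; congr (tfn t _); rewrite map_flatten -map_comp.
have -> : [seq size (tvars (phi v)) | v <- tvars t] =
          shape [seq (map a \o (fun v => tvars (phi v))) v | v <- tvars t].
  by rewrite /shape -map_comp; apply: eq_map => v /=; rewrite size_map.
by rewrite flattenK; elim: (tvars t) => //= v s ->.
Qed.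

Notation stream_fun := (nat -> (nat -> bool) -> bool).

Definition causal (F : stream_fun) : Prop :=
  forall k al be, (forall j, j <= k -> al j = be j) -> F k al = F k be.

Definition decodable (F : stream_fun) : Prop :=
  forall j, exists L, forall al be, (forall i, i < L -> F i al = F i be) -> al j = be j.

Definition square_fun (t : square) : stream_fun :=
  fun k al => eval (t (uncantor k).1 (uncantor k).2) (fun v => al (cantor v)).

Definition fun_square (F : stream_fun) : square :=
  fun n m => Term (map uncantor (iota 0 (tau n m).+1))
                  (fun bs => F (tau n m) (fun j => nth false bs j)).

Lemma eval_square (t : square) n m a :
  eval (t n m) a = square_fun t (tau n m) (fun j => a (uncantor j)).
Proof.
rewrite /square_fun -[tau n m]/(cantor (n, m)) cantorK.
by congr eval; apply: functional_extensionality => v; rewrite cantorK.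
Qed.

Lemma eval_fun_square F n m a :
  causal F -> eval (fun_square F n m) a = F (tau n m) (fun j => a (uncantor j)).
Proof.
move=> FC; apply: FC => j lt_j.
by rewrite (nth_map (0, 0)) ?size_map ?size_iota // (nth_map 0) ?size_iota // nth_iota.
Qed.

Lemma fun_squareK F k al : causal F -> square_fun (fun_square F) k al = F k al.
Proof.
move=> FC; rewrite /square_fun eval_fun_square // -[tau _ _]/(cantor (uncantor k)) uncantorK.
by apply: FC => j _; rewrite uncantorK.
Qed.

Lemma In_mem (T : eqType) (x : T) (s : seq T) : x \in s -> List.In x s.
Proof. by elim: s => //= y s IH; rewrite inE => /orP [/eqP ->|/IH]; [left|right]. Qed.

Lemma In_bounded (T : Type) (f : T -> nat) (s : seq T) : exists L, forall v, List.In v s -> f v < L.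
Proof.
elim: s => [|v s [L HL]]; first by exists 0.
by exists (maxn (f v).+1 L) => w /= [<-|/HL]; lia.
Qed.

Lemma Qstar_causal t : in_Qstar t -> causal (square_fun t).
Proof.
move=> [tdep _] k al be eq_ab; rewrite /square_fun.
have [s [s_vars teq_s]] := tdep (uncantor k).1 (uncantor k).2.
rewrite !teq_s /eval; congr (tfn s _); apply/eq_in_map => v /s_vars.
by rewrite tri_leE -surjective_pairing uncantorK => /eq_ab.
Qed.

Lemma Qstar_decodable t : in_Qstar t -> decodable (square_fun t).
Proof.
move=> [_ tdet] j; have [Fl Fl_det] := tdet (uncantor j).1 (uncantor j).2.
rewrite -surjective_pairing in Fl_det.
have [L Fl_lt] := In_bounded cantor Fl.
exists L => al be eq_ab.
have := Fl_det (fun v => al (cantor v)) (fun v => be (cantor v)).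
rewrite /eval /= -/(cantor (uncantor j)) uncantorK.
apply=> _ /List.in_map_iff [v [<- /Fl_lt lt_vL]].
by have := eq_ab _ lt_vL; rewrite /square_fun cantorK.
Qed.

Lemma fun_square_Qstar F : causal F -> decodable F -> in_Qstar (fun_square F).
Proof.
move=> FC FD; split=> [n m|i j].
- exists (fun_square F n m); split=> // v /mapP [k].
  rewrite mem_iota add0n => /andP [_ lt_k] ->.
  by rewrite tri_leE uncantorK.
- have [L L_dec] := FD (cantor (i, j)).
  exists (map uncantor (iota 0 L)) => a b eq_ab; rewrite /eval /=.
  have := L_dec (fun k => a (uncantor k)) (fun k => b (uncantor k)).
  rewrite cantorK; apply=> k lt_kL.
  have := eq_ab (fun_square F (uncantor k).1 (uncantor k).2).
  rewrite !eval_fun_square // -[tau _ _]/(cantor (uncantor k)) uncantorK; apply.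
  rewrite -map_comp.
  apply: (List.in_map (fun k => fun_square F (uncantor k).1 (uncantor k).2)).
  by apply: In_mem; rewrite mem_iota.
Qed.

Lemma Qstar_le_square_fun (t s : Qstar) :
  Qstar_le t s <-> exists phi : Qstar, forall k al,
    square_fun (sval t) k al = square_fun (sval s) k (fun j => square_fun (sval phi) j al).
Proof.
split=> [][phi t_s]; exists phi; [move=> k al|move=> n m a].
- rewrite /square_fun t_s eval_subst; congr eval.
  by apply: functional_extensionality => v; rewrite /sq_subst cantorK.
- rewrite eval_subst !eval_square t_s; congr square_fun.
  apply: functional_extensionality => j; rewrite /square_fun /sq_subst; congr eval.
  by apply: functional_extensionality => v; rewrite cantorK.
Qed.

Lemma take_mkseq (T : Type) (f : nat -> T) n m : n <= m -> take n (mkseq f m) = mkseq f n.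
Proof. by move=> le_nm; rewrite /mkseq -map_take take_iota (minn_idPl le_nm). Qed.

Lemma eq_in_mkseq (T : Type) (f g : nat -> T) n :
  (forall i, i < n -> f i = g i) -> mkseq f n = mkseq g n.
Proof. by move=> eq_fg; apply/eq_in_map => i; rewrite mem_iota add0n => /andP [_ /eq_fg]. Qed.

Lemma prefix_nth (T : eqType) (x0 : T) (s w : seq T) i :
  prefix s w -> i < size s -> nth x0 s i = nth x0 w i.
Proof. by move=> /prefixP [x ->] lt_is; rewrite nth_cat lt_is. Qed.

Definition image_tree (F : stream_fun) : tree_set :=
  fun s => exists al, s = mkseq (F^~ al) (size s).

Lemma image_tree_mkseq F al n : image_tree F (mkseq (F^~ al) n).
Proof. by exists al; rewrite size_mkseq. Qed.

(* Flipping one input bit must change some output bit, and by causality not before it. *)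
Lemma decodable_branch F : causal F -> decodable F -> forall al n,
  exists be i, [/\ n <= i, forall j, j < i -> F j be = F j al & F i be != F i al].
Proof.
move=> FC FD al n; pose be j := if j == n then ~~ al j else al j.
have [L L_dec] := FD n.
case: (classic (exists i, F i be != F i al)) => [diff|no_diff]; last first.
  suff : be n = al n by rewrite /be eqxx; case: (al n).
  by apply: L_dec => i _; apply/eqP; apply: contraT => neq_i; case: no_diff; exists i.
have [i neq_i min_i] := ex_minnP diff.
have eq_below j : j < i -> F j be = F j al.
  by move=> lt_ji; apply/eqP; apply: contraT => /min_i; rewrite leqNgt lt_ji.
exists be, i; split=> //; rewrite leqNgt; apply: contraL neq_i => lt_in.
rewrite (FC i be al) ?eqxx // => j le_ji; rewrite /be ifN //.
by apply: contraTneq le_ji => ->; rewrite -ltnNge.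
Qed.

Lemma image_tree_perfect F : causal F -> decodable F -> perfect_tree (image_tree F).
Proof.
move=> FC FD; split; [|split].
- by exists (fun => false).
- move=> s t pre_st [al t_al]; exists al.
  have s_take : s = take (size s) t by apply/esym/eqP; rewrite -prefixE.
  by rewrite {1}s_take t_al take_mkseq // size_prefix.
- move=> s [al s_al].
  have [be [i [le_si eq_below neq_i]]] := decodable_branch FC FD al (size s).
  exists (mkseq (F^~ al) i); split.
  + by rewrite s_al -(take_mkseq _ le_si) prefix_take.
  + have tree_al := image_tree_mkseq F al i.+1.
    have tree_be := image_tree_mkseq F be i.+1.
    rewrite !mkseqS in tree_al tree_be; rewrite (eq_in_mkseq eq_below) in tree_be.
    by move: neq_i tree_al tree_be; case: (F i al); case: (F i be).
Qed.

Section DenseMap.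

Variables (P Q : Type) (leP : P -> P -> Prop) (leQ : Q -> Q -> Prop) (e : P -> Q).
Hypotheses (leQ_refl : forall q, leQ q q)
           (leQ_trans : forall q1 q2 q3, leQ q1 q2 -> leQ q2 q3 -> leQ q1 q3).
Hypothesis e_mono : forall p p', leP p p' -> leQ (e p) (e p').
Hypothesis e_dense : forall q, exists p, leQ (e p) q.
Hypothesis e_reflect : forall p p1, leQ (e p1) (e p) -> exists p2, leP p2 p1 /\ leP p2 p.

(* [A] goes to the regular open set generated by its image, [B] to its preimage. *)
Let f (A : P -> Prop) (q : Q) : Prop := forall q', leQ q' q -> exists p, A p /\ leQ (e p) q'.
Let g (B : Q -> Prop) (p : P) : Prop := B (e p).

Let gfK A : regular_open leP A -> set_eq (g (f A)) A.
Proof.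
move=> [A_down A_reg] p; split.
- move=> fA_ep; apply: A_reg => p' le_p'p.
  have [p1 [Ap1 le_p1]] := fA_ep (e p') (e_mono le_p'p).
  have [p2 [le_p21 le_p2]] := e_reflect le_p1.
  by exists p2; split=> //; exact: A_down le_p21.
- move=> Ap q' le_q'.
  have [p1 le_p1] := e_dense q'.
  have [p2 [le_p21 le_p2]] := e_reflect (leQ_trans le_p1 le_q').
  exists p2; split; first exact: A_down le_p2.
  exact: leQ_trans (e_mono le_p21) le_p1.
Qed.

Let fgK B : regular_open leQ B -> set_eq (f (g B)) B.
Proof.
move=> [B_down B_reg] q; split.
- by move=> fgB; apply: B_reg => q' /fgB [p [Bp le_p]]; exists (e p).
- move=> Bq q' le_q'; have [p le_p] := e_dense q'.
  by exists p; split=> //; exact: B_down (leQ_trans le_p le_q').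
Qed.

Lemma forcing_equivalent_of_dense_map : forcing_equivalent leP leQ.
Proof.
exists f, g; split; [|split; [|split; [|split]]].
- move=> A _; split=> [q q1 fAq le_q1 q' le_q'|q fA_dense q' le_q'].
  + exact: fAq _ (leQ_trans le_q' le_q1).
  + have [r [le_r fAr]] := fA_dense q' le_q'.
    have [p [Ap le_p]] := fAr r (leQ_refl r).
    by exists p; split=> //; exact: leQ_trans le_p le_r.
- move=> B [B_down B_reg]; split=> [p p' Bep le_p'p|p gB_dense].
  + exact: B_down Bep (e_mono le_p'p).
  + apply: B_reg => q le_q; have [p1 le_p1] := e_dense q.
    have [p2 [le_p21 le_p2]] := e_reflect (leQ_trans le_p1 le_q).
    have [p3 [le_p32 Bp3]] := gB_dense p2 le_p2.
    exists (e p3); split=> //.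
    exact: leQ_trans (e_mono le_p32) (leQ_trans (e_mono le_p21) le_p1).
- exact: gfK.
- exact: fgK.
- move=> A1 A2 RO1 RO2; split=> [sub12 q fA1q q' le_q'|sub12 p A1p].
  + by have [p [A1p le_p]] := fA1q q' le_q'; exists p; split=> //; exact: sub12.
  + by apply/(gfK RO2)/sub12/(gfK RO1).
Qed.

End DenseMap.

Section Parametrization.

Variable q : tree_set.
Hypothesis q_perfect : perfect_tree q.
Variable M : nat -> nat.
Hypothesis M_gt : forall k, k < M k.

Lemma exists_splitting_extension n s : exists u, q s ->
  [/\ prefix s u, n <= size u, q (rcons u false) & q (rcons u true)].
Proof.
case: (classic (q s)) => [qs|]; last by exists s.
case: q_perfect => _ [q_prefix q_split].
have [u [pre_su le_nu qu]] : exists u, [/\ prefix s u, n <= size u & q u].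
  elim: n => [|n [u [pre_su le_nu qu]]]; first by exists s; rewrite prefix_refl.
  have [t [pre_ut [qt0 _]]] := q_split u qu.
  exists (rcons t false); split=> //.
  - exact: prefix_trans pre_su (prefix_trans pre_ut (prefix_rcons _ _)).
  - by rewrite size_rcons ltnS (leq_trans le_nu (size_prefix pre_ut)).
have [t [pre_ut [qt0 qt1]]] := q_split u qu.
exists t => _; split=> //; first exact: prefix_trans pre_ut.
exact: leq_trans (size_prefix pre_ut).
Qed.

Definition split_ext n s : seq bool :=
  sval (constructive_indefinite_description _ (exists_splitting_extension n s)).

Lemma split_extP n s : q s ->
  [/\ prefix s (split_ext n s), n <= size (split_ext n s),
      q (rcons (split_ext n s) false) & q (rcons (split_ext n s) true)].
Proof. exact: svalP (constructive_indefinite_description _ (exists_splitting_extension n s)). Qed.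

(* [node al k] is the k-th splitting node of q along the branch chosen by [al];
   its length is at least [M k]. *)
Fixpoint node (al : nat -> bool) (k : nat) : seq bool :=
  if k is k'.+1 then split_ext (M k) (rcons (node al k') (al k')) else split_ext (M 0) [::].

Lemma node_spec al k :
  [/\ M k <= size (node al k), q (rcons (node al k) false) & q (rcons (node al k) true)].
Proof.
have q_nil : q [::] by case: q_perfect.
elim: k => [|k [_ q0 q1]]; first by case: (split_extP (M 0) q_nil).
have q_al : q (rcons (node al k) (al k)) by case: (al k).
by case: (split_extP (M k.+1) q_al).
Qed.

Lemma node_succ al k : prefix (rcons (node al k) (al k)) (node al k.+1).
Proof.
have [_ q0 q1] := node_spec al k.
have q_al : q (rcons (node al k) (al k)) by case: (al k).
by case: (split_extP (M k.+1) q_al).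
Qed.

Lemma node_prefix al k k' : k <= k' -> prefix (node al k) (node al k').
Proof.
elim: k' => [|k' IH]; first by rewrite leqn0 => /eqP ->; exact: prefix_refl.
rewrite leq_eqVlt => /predU1P [->|/IH pre]; first exact: prefix_refl.
exact: prefix_trans pre (prefix_trans (prefix_rcons _ _) (node_succ al k')).
Qed.

Lemma eq_node al be k : (forall j, j < k -> al j = be j) -> node al k = node be k.
Proof. by elim: k => //= k IH eq_ab; rewrite IH ?eq_ab // => j /ltnW /eq_ab. Qed.

Definition param : stream_fun := fun i al => nth false (node al i.+1) i.

Lemma param_nth al i k : i < size (node al k) -> param i al = nth false (node al k) i.
Proof.
move=> lt_ik; rewrite /param; case: (leqP k i.+1) => [le_k|/ltnW lt_k].
  by rewrite (prefix_nth _ (node_prefix al le_k) lt_ik).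
have [le_M _ _] := node_spec al i.+1.
by rewrite (prefix_nth _ (node_prefix al lt_k)) // (leq_trans _ le_M) // ltnW.
Qed.

Lemma param_causal : causal param.
Proof. by move=> k al be eq_ab; rewrite /param (@eq_node al be) // => j /eq_ab. Qed.

Lemma param_slow al be k i :
  (forall j, j <= k -> al j = be j) -> i < M k.+1 -> param i al = param i be.
Proof.
move=> eq_ab lt_iM.
have [le_Ma _ _] := node_spec al k.+1; have [le_Mb _ _] := node_spec be k.+1.
rewrite (param_nth (leq_trans lt_iM le_Ma)) (param_nth (leq_trans lt_iM le_Mb)).
by rewrite (@eq_node al be).
Qed.

Lemma param_in_tree al n : q (mkseq (param^~ al) n).
Proof.
have [le_M q0 _] := node_spec al n.
have lt_n : n < size (node al n) := leq_trans (M_gt n) le_M.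
have -> : mkseq (param^~ al) n = take n (node al n).
  apply: (@eq_from_nth _ false); first by rewrite size_mkseq size_take lt_n.
  move=> i; rewrite size_mkseq => lt_in.
  by rewrite nth_mkseq // nth_take // (param_nth (ltn_trans lt_in lt_n)).
case: q_perfect => _ [q_prefix _]; apply: q_prefix q0.
exact: prefix_trans (prefix_take _ _) (prefix_rcons _ _).
Qed.

Lemma param_at_node al k : param (size (node al k)) al = al k.
Proof.
have pre := node_succ al k.
have lt_k : size (node al k) < size (rcons (node al k) (al k)) by rewrite size_rcons.
rewrite (param_nth (leq_trans lt_k (size_prefix pre))) -(prefix_nth _ pre lt_k).
by rewrite nth_rcons ltnn eqxx.
Qed.

Definition node_bound k : nat :=
  \max_(s : k.-tuple bool) (size (node (fun j => nth false s j) k)).+1.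

Lemma size_node_lt al k : size (node al k) < node_bound k.
Proof.
have size_s : size (mkseq al k) == k by rewrite size_mkseq.
rewrite (@eq_node al (fun j => nth false (Tuple size_s) j)); last first.
  by move=> j lt_jk /=; rewrite nth_mkseq.
exact: (leq_bigmax (Tuple size_s)).
Qed.

(* The input bit [al k] is read off at position [size (node al k)], and the node
   itself is determined by the earlier input bits. *)
Lemma param_decodable : decodable param.
Proof.
move=> j; exists (\max_(k < j.+1) node_bound k) => al be eq_out.
suff eq_in k : k <= j -> al k = be k by exact: eq_in.
elim/ltn_ind: k => k IH le_kj.
have eq_nodes : node al k = node be k.
  by apply: eq_node => i lt_ik; apply: IH; last exact: leq_trans (ltnW lt_ik) le_kj.
rewrite -(param_at_node al k) -(param_at_node be k) -eq_nodes; apply: eq_out.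
apply: leq_trans (size_node_lt al k) _.
exact: (@leq_bigmax _ (fun k : 'I_j.+1 => node_bound k) (Ordinal (le_kj : k < j.+1))).
Qed.

End Parametrization.

Definition decoding_modulus (F : stream_fun) (D : nat -> nat) : Prop :=
  forall k al be, (forall i, i < D k -> F i al = F i be) -> al k = be k.

Definition slow_for (R : stream_fun) (D : nat -> nat) : Prop :=
  forall k al be, (forall j, j <= k -> al j = be j) -> forall i, i < D k -> R i al = R i be.

Lemma decoding_modulusW F D D' :
  decoding_modulus F D -> (forall k, D k <= D' k) -> decoding_modulus F D'.
Proof. by move=> FD le_D k al be eq_out; apply: FD => i /leq_trans/(_ (le_D k))/eq_out. Qed.

Lemma decodable_modulus F : decodable F -> exists D, decoding_modulus F D.
Proof.
move=> FD; exists (fun k => sval (constructive_indefinite_description _ (FD k))) => k.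
exact: svalP (constructive_indefinite_description _ (FD k)).
Qed.

(* No compactness argument is needed: input bit [k] of any preimage of a long
   enough prefix of [y] is already pinned down by the decoding modulus. *)
Lemma range_closed F D y : causal F -> decoding_modulus F D ->
  (forall n, image_tree F (mkseq y n)) -> exists al, forall i, F i al = y i.
Proof.
move=> FC FD y_tree.
have [w w_y] : exists w : nat -> nat -> bool, forall n i, i < n -> F i (w n) = y i.
  exists (fun n => sval (constructive_indefinite_description _ (y_tree n))) => n i lt_in.
  case: (constructive_indefinite_description _ (y_tree n)) => al /= /(congr1 (nth false ^~ i)).
  by rewrite size_mkseq !nth_mkseq.
have w_agree n k : D k <= n -> w n k = w (D k) k.
  by move=> le_Dn; apply: FD => i lt_iD; rewrite !w_y // (leq_trans lt_iD).
exists (fun k => w (D k) k) => i.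
pose N := maxn i.+1 (\max_(j < i.+1) D j).
rewrite -(w_y N i) ?leq_maxl //; apply: FC => j le_ji; rewrite w_agree //.
apply: leq_trans (leq_maxr _ _).
exact: (@leq_bigmax _ (fun j : 'I_i.+1 => D j) (Ordinal (le_ji : j < i.+1))).
Qed.

(* [R] factors as [G \o Phi] with [Phi] the inverse of [G] applied to [R]; slowness of
   [R] is exactly what makes [Phi] causal. *)
Lemma factor_through G R D : causal G -> decoding_modulus G D ->
  causal R -> decodable R -> slow_for R D ->
  (forall al, exists be, forall i, G i be = R i al) ->
  exists Phi, [/\ causal Phi, decodable Phi & forall k al, R k al = G k (fun j => Phi j al)].
Proof.
move=> GC GD RC RD R_slow R_sub.
pose pre al := sval (constructive_indefinite_description _ (R_sub al)).
have G_pre al i : G i (pre al) = R i al.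
  exact: svalP (constructive_indefinite_description _ (R_sub al)) i.
exists (fun k al => pre al k); split.
- move=> k al be eq_ab; apply: GD => i lt_iD; rewrite !G_pre; exact: R_slow eq_ab _ lt_iD.
- move=> j; have [L L_dec] := RD j; exists L => al be eq_pre; apply: L_dec => i lt_iL.
  by rewrite -!G_pre; apply: GC => l le_li; apply: eq_pre; exact: leq_ltn_trans le_li lt_iL.
- by move=> k al; rewrite -G_pre.
Qed.

Definition Qstar_of F (FC : causal F) (FD : decodable F) : Qstar :=
  exist _ (fun_square F) (fun_square_Qstar FC FD).

Definition Qimage (t : Qstar) : Sacks :=
  exist _ (image_tree (square_fun (sval t)))
    (image_tree_perfect (Qstar_causal (svalP t)) (Qstar_decodable (svalP t))).

Lemma Qstar_le_of_factor (t s : Qstar) Phi : causal Phi -> decodable Phi ->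
  (forall k al, square_fun (sval t) k al = square_fun (sval s) k (fun j => Phi j al)) ->
  Qstar_le t s.
Proof.
move=> PC PD t_s; apply/Qstar_le_square_fun; exists (Qstar_of PC PD) => k al /=.
by rewrite t_s; congr square_fun; apply: functional_extensionality => j; rewrite fun_squareK.
Qed.

Lemma Qimage_mono t s : Qstar_le t s -> Sacks_le (Qimage t) (Qimage s).
Proof.
move=> /Qstar_le_square_fun [phi t_s] u [al ->].
exists (fun j => square_fun (sval phi) j al).
by rewrite size_mkseq; apply: eq_mkseq => i; exact: t_s.
Qed.

Lemma Qimage_dense (T : Sacks) : exists t, Sacks_le (Qimage t) T.
Proof.
have succ_gt k : k < k.+1 := ltnSn k.
have RC := param_causal (svalP T) succn.
exists (Qstar_of RC (param_decodable (svalP T) succ_gt)) => s [al ->] /=.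
rewrite (eq_mkseq (fun i => fun_squareK i al RC)).
exact: param_in_tree.
Qed.

Lemma Qstar_common_extension (t t1 : Qstar) : Sacks_le (Qimage t1) (Qimage t) ->
  exists t2, Qstar_le t2 t1 /\ Qstar_le t2 t.
Proof.
move=> sub; set F := square_fun (sval t); set F1 := square_fun (sval t1).
have FC : causal F := Qstar_causal (svalP t).
have F1C : causal F1 := Qstar_causal (svalP t1).
have [D0 FD0] := decodable_modulus (Qstar_decodable (svalP t)).
have [D1 F1D1] := decodable_modulus (Qstar_decodable (svalP t1)).
pose D k := maxn (D0 k) (D1 k).
have FD : decoding_modulus F D := decoding_modulusW FD0 (fun k => leq_maxl _ _).
have F1D : decoding_modulus F1 D := decoding_modulusW F1D1 (fun k => leq_maxr _ _).
pose M k := maxn k.+1 (D k.-1).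
have M_gt k : k < M k by rewrite leq_max ltnSn.
have q_perfect := svalP (Qimage t1).
set R := param q_perfect M.
have RC : causal R := param_causal q_perfect M.
have RD : decodable R := param_decodable q_perfect M_gt.
have R_slow : slow_for R D.
  move=> k al be eq_ab i lt_i; apply: (param_slow q_perfect M_gt eq_ab).
  exact: leq_trans lt_i (leq_maxr _ _).
have R_sub1 al : exists be, forall i, F1 i be = R i al.
  by apply: (range_closed F1C F1D) => n; exact: param_in_tree.
have R_sub al : exists be, forall i, F i be = R i al.
  by apply: (range_closed FC FD) => n; apply: sub; exact: param_in_tree.
have [Phi1 [P1C P1D R_F1]] := factor_through F1C F1D RC RD R_slow R_sub1.
have [Phi [PC PD R_F]] := factor_through FC FD RC RD R_slow R_sub.
exists (Qstar_of RC RD); split.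
- by apply: (Qstar_le_of_factor P1C P1D) => k al /=; rewrite fun_squareK // R_F1.
- by apply: (Qstar_le_of_factor PC PD) => k al /=; rewrite fun_squareK // R_F.
Qed.

Theorem mainTheorem3 : forcing_equivalent Qstar_le Sacks_le.
Proof.
apply: (forcing_equivalent_of_dense_map (e := Qimage)).
- by move=> T.
- by move=> T1 T2 T3 sub12 sub23 s /sub12 /sub23.
- exact: Qimage_mono.
- exact: Qimage_dense.
- move=> t t1; exact: Qstar_common_extension.
Qed.
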